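(* For every $n\equiv 15 \pmod{16}$ (with $n\geq 15$), there exists an almost 2-perfect maximum 8-cycle packing of $K_n$.
   Context: An 8-cycle packing of $K_n$ on vertex set $\mathcal{X}$ is a triple $(\mathcal{X},\mathcal{C},\mathcal{L})$ with $\mathcal{C}$ a collection of pairwise edge-disjoint 8-cycles of $K_n$ and leave $\mathcal{L}$ the set of edges in no cycle of $\mathcal{C}$; it is maximum if $|\mathcal{L}|$ is minimum among all 8-cycle packings of $K_n$. For an 8-cycle $C$, an inside 8-cycle of $C$ is an 8-cycle on the same vertex set sharing no edge with $C$. The packing is almost 2-perfect if one can choose for each $C\in\mathcal{C}$ an inside 8-cycle $C'$ such that $(\mathcal{X},\{C'\},\mathcal{L})$ is again an 8-cycle packing with the same leave. *)

From mathcomp Require Import all_boot.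
Set Implicit Arguments. Unset Strict Implicit. Unset Printing Implicit Defensive.

Definition Kn_edges (n : nat) : {set {set 'I_n}} := [set e : {set 'I_n} | #|e| == 2].

Definition is_cycle8 n (c : 8.-tuple 'I_n) : bool := uniq c.

Definition cyc_edges n (c : 8.-tuple 'I_n) : {set {set 'I_n}} :=
  [set [set tnth c i; tnth c (ordS i)] | i : 'I_8].

Definition cyc_verts n (c : 8.-tuple 'I_n) : {set 'I_n} := [set x in c].

Definition packing8 n (cs : seq (8.-tuple 'I_n)) : bool :=
  all (@is_cycle8 n) cs &&
  pairwise (fun c d => [disjoint cyc_edges c & cyc_edges d]) cs.

Definition leave8 n (cs : seq (8.-tuple 'I_n)) : {set {set 'I_n}} :=
  Kn_edges n :\: \bigcup_(c <- cs) cyc_edges c.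

Definition maximum_packing8 n (cs : seq (8.-tuple 'I_n)) : Prop :=
  packing8 cs /\
  forall cs' : seq (8.-tuple 'I_n), packing8 cs' -> #|leave8 cs| <= #|leave8 cs'|.

Definition inside8 n (c c' : 8.-tuple 'I_n) : bool :=
  [&& is_cycle8 c', cyc_verts c' == cyc_verts c &
      [disjoint cyc_edges c & cyc_edges c']].

Definition almost_2perfect8 n (cs : seq (8.-tuple 'I_n)) : Prop :=
  exists cs' : seq (8.-tuple 'I_n),
    [/\ all2 (@inside8 n) cs cs', packing8 cs' & leave8 cs' = leave8 cs].

From mathcomp Require Import all_boot zify.
Set Implicit Arguments. Unset Strict Implicit. Unset Printing Implicit Defensive.

(* Write n = 16 K + 15 and split the vertices into 15 base vertices followed by
   K blocks of 16.  An edge of K_n lies among the base vertices, between the base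
   and a block or inside a block (these edges form K_31 minus K_15), or between
   two blocks (a K_{16,16}).  Three small designs, checked here by evaluation,
   cover these three kinds of edges by 8-cycles, except for three triangles on
   the base vertices, and each comes with a second family of inside cycles
   covering the same edges.  Relabelled into place they give a packing with a
   leave of 9 edges, together with its family of inside cycles.
   It is maximum: as C(n, 2) = 1 mod 8, every leave has 1 mod 8 edges, and as
   n is odd, every vertex has even degree in every leave, so no leave is a
   single edge. *)

Lemma eqEset2 (T : finType) (a b c d : T) :
  ([set a; b] == [set c; d]) = ((a, b) == (c, d)) || ((a, b) == (d, c)).
Proof.
apply/eqP/idP => [/setP E | /orP[] /eqP[-> ->] //]; last exact: setUC.
move: (E a) (E b) (E c) (E d); rewrite !inE !eqxx ?orbT /=.
move=> /esym/orP[]/eqP-> /esym/orP[]/eqP-> /orP[]/eqP ? /orP[]/eqP ?;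
  by subst; rewrite !eqxx ?orbT.
Qed.

Lemma bin2_mul2 n : 'C(n, 2) * 2 = n * n.-1.
Proof. by rewrite -[n.-1]bin1 mul_bin_diag mulnC. Qed.

Lemma card_bigcup_seq_le (I : Type) (T : finType) (F : I -> {set T}) (s : seq I) :
  #|\bigcup_(i <- s) F i| <= \sum_(i <- s) #|F i|.
Proof.
elim: s => [|i s IH]; first by rewrite !big_nil cards0.
by rewrite !big_cons (leq_trans (leq_card_setU _ _).1) ?leq_add2l.
Qed.

Lemma pairwise_disjoint_cardE (I : eqType) (T : finType) (F : I -> {set T}) (s : seq I) :
  pairwise (fun i j => [disjoint F i & F j]) s =
  (#|\bigcup_(i <- s) F i| == \sum_(i <- s) #|F i|).
Proof.
elim: s => [|x s IH]; first by rewrite !big_nil cards0.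
have le_U := card_bigcup_seq_le F s.
have disj_x : all (fun j => [disjoint F x & F j]) s = [disjoint F x & \bigcup_(i <- s) F i].
  elim: s {IH le_U} => [|y s IHs]; first by rewrite big_nil -setI_eq0 setI0 eqxx.
  by rewrite /= big_cons IHs -!setI_eq0 setIUr setU_eq0.
rewrite pairwise_cons [all _ s]disj_x IH !big_cons.
have [le_xU eq_xU] := leq_card_setU (F x) (\bigcup_(i <- s) F i).
case: (boolP [disjoint _ & _]) eq_xU => [_ /eqP-> | _ /negbT neq_xU] /=.
  by rewrite eqn_add2l.
by apply/esym/negbTE/eqP; move/eqP: neq_xU; lia.
Qed.

Lemma all2_cat (S T : Type) (r : S -> T -> bool) s1 s2 t1 t2 :
  all2 r s1 t1 -> all2 r s2 t2 -> all2 r (s1 ++ s2) (t1 ++ t2).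
Proof. by elim: s1 t1 => [|x s1 IH] [|y t1] //= /andP[-> /IH]. Qed.

Lemma all2_map (S T S' T' : Type) (P : S -> T -> bool) (r : S' -> T' -> bool) f g s t :
  (forall x y, P x y -> r (f x) (g y)) -> all2 P s t -> all2 r (map f s) (map g t).
Proof. by move=> fg; elim: s t => [|x s IH] [|y t] //= /andP[/fg-> /IH]. Qed.

Lemma all2_allpairs (I : eqType) (S T S' T' : Type) (P : S -> T -> bool)
    (r : S' -> T' -> bool) (f : I -> S -> S') (g : I -> T -> T') (s : seq I) t t' :
    (forall i x y, i \in s -> P x y -> r (f i x) (g i y)) -> all2 P t t' ->
  all2 r [seq f i x | i <- s, x <- t] [seq g i y | i <- s, y <- t'].
Proof.
elim: s => //= i s IH fg Ptt'; apply: all2_cat.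
  by apply: all2_map Ptt' => x y; apply: fg; rewrite mem_head.
by apply: IH => // j x y js; apply: fg; rewrite in_cons js orbT.
Qed.

Lemma ordS_neq (i : 'I_8) : ordS i != i.
Proof. by apply/eqP => /(congr1 val); case: i => i /= lt_i8; lia. Qed.

Lemma ord_pred_neq (i : 'I_8) : ord_pred i != i.
Proof. by apply/eqP => /(congr1 val); case: i => i /= lt_i8; lia. Qed.

Lemma ordSS_neq (i : 'I_8) : ordS (ordS i) != i.
Proof. by apply/eqP => /(congr1 val); case: i => i /= lt_i8; lia. Qed.

Section CycleEdges.
Variable n : nat.
Implicit Types (c : 8.-tuple 'I_n) (a : 'I_n).

Definition cyc_edge c (i : 'I_8) : {set 'I_n} := [set tnth c i; tnth c (ordS i)].

Lemma cyc_edge_inj c : uniq c -> injective (cyc_edge c).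
Proof.
move=> /tuple_uniqP inj i j /eqP; rewrite eqEset2 !xpair_eqE !(inj_eq inj).
case/orP=> /andP[/eqP ij /eqP ji] //.
by move: (ordSS_neq j); rewrite -ij ji eqxx.
Qed.

Lemma card_cyc_edges c : uniq c -> #|cyc_edges c| = 8.
Proof. by move=> uc; rewrite card_imset ?card_ord //; exact: cyc_edge_inj. Qed.

Lemma cyc_edges_sub c : uniq c -> cyc_edges c \subset Kn_edges n.
Proof.
move=> /tuple_uniqP inj; apply/subsetP => _ /imsetP[i _ ->].
by rewrite inE cards2 (inj_eq inj) [i == _]eq_sym ordS_neq.
Qed.

Lemma card_Kn_edges : #|Kn_edges n| = 'C(n, 2).
Proof. by rewrite card_draws card_ord. Qed.

Lemma card_Kn_edges_at a : #|[set e in Kn_edges n | a \in e]| = n.-1.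
Proof.
have -> : [set e in Kn_edges n | a \in e] = [set [set a; x] | x in [set~ a]].
  apply/setP => e; rewrite !inE; apply/andP/imsetP => [[/cards2P[u [v [uv ->]]]]|].
    rewrite !inE => /orP[]/eqP->; first by exists v; rewrite // !inE eq_sym.
    by exists u; [rewrite !inE | rewrite setUC].
  by move=> [x]; rewrite !inE => xa ->; rewrite cards2 [a == _]eq_sym xa set21.
rewrite card_in_imset ?cardsC1 ?card_ord // => x y _ /[!inE] ya /eqP.
by rewrite eqEset2 !xpair_eqE eqxx [a == y]eq_sym (negbTE ya) orbF => /eqP.
Qed.

Lemma cyc_edges_at_even c a : uniq c -> ~~ odd #|[set e in cyc_edges c | a \in e]|.
Proof.
move=> uc; have inj := tuple_uniqP _ uc.
have -> : [set e in cyc_edges c | a \in e] = cyc_edge c @: [set i | a \in cyc_edge c i].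
  apply/setP => e; rewrite !inE; apply/andP/imsetP => [[/imsetP[i _ ->] ai]|[i]].
    by exists i; rewrite // in_set.
  by rewrite inE => ai ->; split; first exact: imset_f.
rewrite card_imset; last exact: cyc_edge_inj.
have [/tnthP[j ->]|a_notin_c] := boolP (a \in c).
  have -> : [set i | tnth c j \in cyc_edge c i] = [set j; ord_pred j].
    apply/setP => i; rewrite !inE !(inj_eq inj).
    have [-> //|_ /=] := eqVneq j i.
    by apply/eqP/eqP => [->|->]; rewrite ?ordSK ?ord_predK.
  by rewrite cards2 eq_sym ord_pred_neq.
suff -> : [set i | a \in cyc_edge c i] = set0 by rewrite cards0.
apply/setP => i; rewrite !inE; apply/negP => /orP[]/eqP a_eq;
  by rewrite a_eq mem_tnth in a_notin_c.
Qed.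

End CycleEdges.

Notation edges_of cs := (\bigcup_(c <- cs) cyc_edges c).

Section Packings.
Variable n : nat.
Implicit Types (cs : seq (8.-tuple 'I_n)) (L : {set {set 'I_n}}).

Lemma sum_card_cyc_edges cs :
  all (@is_cycle8 n) cs -> \sum_(c <- cs) #|cyc_edges c| = 8 * size cs.
Proof.
elim: cs => [|c cs IH] /=; first by rewrite big_nil.
by case/andP=> uc /IH; rewrite big_cons card_cyc_edges // mulnS => ->.
Qed.

Lemma edges_of_sub cs : all (@is_cycle8 n) cs -> edges_of cs \subset Kn_edges n.
Proof.
move=> /allP cyc_cs; rewrite big_seq.
apply: (big_ind (fun U : {set {set 'I_n}} => U \subset Kn_edges n)) => [|U V sU sV|c c_in].
- exact: sub0set.
- by rewrite subUset sU.
- exact/cyc_edges_sub/cyc_cs.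
Qed.

Lemma leave8_card cs : packing8 cs -> #|leave8 cs| + 8 * size cs = 'C(n, 2).
Proof.
case/andP=> cyc_cs; rewrite pairwise_disjoint_cardE sum_card_cyc_edges // => /eqP card_U.
have sub_U := edges_of_sub cyc_cs.
rewrite /leave8 cardsD (setIidPr sub_U) card_U -card_Kn_edges.
by have := subset_leq_card sub_U; rewrite card_U; lia.
Qed.

Lemma packing8_of_cover cs L :
    all (@is_cycle8 n) cs -> Kn_edges n :\: L \subset edges_of cs ->
    8 * size cs + #|L| <= 'C(n, 2) ->
  packing8 cs /\ leave8 cs = Kn_edges n :&: L.
Proof.
move=> cyc_cs cover le_Kn.
have le_U := card_bigcup_seq_le (@cyc_edges n) cs.
rewrite sum_card_cyc_edges // in le_U.
have le_KL := subset_leq_card (subsetIr (Kn_edges n) L).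
have := subset_leq_card cover; rewrite cardsD card_Kn_edges => ge_U.
have card_U : #|edges_of cs| = 8 * size cs by lia.
have U_eq : edges_of cs = Kn_edges n :\: L.
  by apply/eqP; rewrite eq_sym eqEcard cover cardsD card_Kn_edges card_U; lia.
split; last by rewrite /leave8 U_eq setDDr setDv set0U.
by rewrite /packing8 cyc_cs pairwise_disjoint_cardE sum_card_cyc_edges //= card_U.
Qed.

Lemma leave8_at_even cs a :
  odd n -> packing8 cs -> ~~ odd #|[set e in leave8 cs | a \in e]|.
Proof.
move=> odd_n /andP[cyc_cs disj_cs].
set S := [set e in Kn_edges n | a \in e].
have -> : [set e in leave8 cs | a \in e] = S :\: edges_of cs.
  by apply/setP => e; rewrite !inE andbA.
have even_SU : ~~ odd #|S :&: edges_of cs|.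
  have disj_S : pairwise (fun c d => [disjoint S :&: cyc_edges c & S :&: cyc_edges d]) cs.
    apply: sub_pairwise disj_cs => c d /= /(disjointWl (subsetIr S _)).
    exact: disjointWr (subsetIr S _).
  move: disj_S; rewrite big_distrr pairwise_disjoint_cardE => /eqP ->.
  rewrite big_seq; apply: (big_ind (fun k => ~~ odd k)) => [//|k l|c c_in].
    by rewrite oddD => /negbTE-> /negbTE->.
  have -> : S :&: cyc_edges c = [set e in cyc_edges c | a \in e].
    apply/setP => e; rewrite in_setI !in_set andbC; apply: andb_id2l => ec.
    by move: (subsetP (cyc_edges_sub (allP cyc_cs c c_in)) e ec); rewrite inE => ->.
  exact/cyc_edges_at_even/(allP cyc_cs).
rewrite cardsD oddB ?subset_leq_card ?subsetIl // card_Kn_edges_at (negbTE even_SU).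
by move: odd_n; case: (n) => //= m; rewrite addbF.
Qed.

Lemma leave8_neq1 cs : odd n -> packing8 cs -> #|leave8 cs| != 1.
Proof.
move=> odd_n pk; apply/negP => /cards1P[e leave_e].
have : e \in Kn_edges n by move: (set11 e); rewrite -leave_e !inE => /andP[].
rewrite inE => /cards2P[a [b [_ e_ab]]].
have := leave8_at_even a odd_n pk.
suff -> : [set e0 in leave8 cs | a \in e0] = [set e] by rewrite cards1.
by apply/setP => e0; rewrite leave_e !inE andb_idr // => /eqP->; rewrite e_ab set21.
Qed.

Lemma maximum_packing8_of_leave cs :
    odd n -> 'C(n, 2) %% 8 = 1 -> packing8 cs -> #|leave8 cs| <= 9 ->
  maximum_packing8 cs.
Proof.
move=> odd_n bin_n pk le9; split=> // cs' pk'.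
have := leave8_card pk'; have /eqP := leave8_neq1 odd_n pk'; lia.
Qed.

End Packings.

(* Cycles of the small designs are lists of labels in [0, m), so that the
   designs can be checked by evaluation.  [relabel N h] transports them into
   'I_N.+1 along [h]; it is total thanks to [inord], and faithful when [h] is
   an [embedding] of [0, m) into [0, N]. *)
Definition redge (s : seq nat) (i : nat) : nat * nat := (nth 0 s i, nth 0 s (i.+1 %% 8)).

Definition same_edge (p q : nat * nat) : bool := (p == q) || (p == (q.2, q.1)).

Definition rcycle (m : nat) (s : seq nat) : bool :=
  [&& size s == 8, all (fun v => v < m) s & uniq s].

Definition rdisjoint (s s' : seq nat) : bool :=
  all (fun i => all (fun j => ~~ same_edge (redge s i) (redge s' j)) (iota 0 8)) (iota 0 8).

Definition rinside (m : nat) (s s' : seq nat) : bool :=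
  [&& rcycle m s', perm_eq s s' & rdisjoint s s'].

Definition rcovers (T : seq (seq nat)) (x y : nat) : bool :=
  has (fun s => has (fun i => same_edge (redge s i) (x, y)) (iota 0 8)) T.

Lemma rinside_rcycle m s s' : rinside m s s' -> rcycle m s.
Proof.
case/and3P=> /and3P[/eqP size_s' /allP lt_s' uniq_s'] pss' _.
rewrite /rcycle (perm_size pss') size_s' (perm_uniq pss') uniq_s' andbT /=.
by apply/allP => v; rewrite (perm_mem pss'); apply: lt_s'.
Qed.

Lemma all2_rinside_rcycle m T T' :
  all2 (rinside m) T T' -> all (rcycle m) T /\ all (rcycle m) T'.
Proof.
elim: T T' => [|s T IH] [|s' T'] //= /andP[ins /IH[-> ->]].
by rewrite (rinside_rcycle ins); case/and3P: ins => ->.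
Qed.

Definition relabel N (h : nat -> nat) (s : seq nat) : 8.-tuple 'I_N.+1 :=
  [tuple inord (h (nth 0 s i)) | i < 8].

Definition embedding N m (h : nat -> nat) :=
  (forall v, v < m -> h v <= N) /\ (forall u v, u < m -> v < m -> h u = h v -> u = v).

Section Relabel.
Variables (N m : nat) (h : nat -> nat).

Lemma relabel_cover (cs : seq (8.-tuple 'I_N.+1)) T x y (a b : 'I_N.+1) :
    {subset [seq relabel N h s | s <- T] <= cs} -> rcovers T x y ->
    val a = h x -> val b = h y ->
  [set a; b] \in edges_of cs.
Proof.
move=> sub_cs /hasP[s sT /hasP[i]]; rewrite mem_iota => /= lt_i8 e_i a_x b_y.
rewrite (big_rem (relabel N h s)) ?sub_cs ?map_f // in_setU; apply/orP; left.
apply/imsetP; exists (Ordinal lt_i8) => //; rewrite /cyc_edge !tnth_mktuple /=.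
rewrite -(inord_val a) -(inord_val b) a_x b_y.
by move: e_i; rewrite /same_edge /redge => /orP[]/eqP[-> ->]; rewrite // setUC.
Qed.

Hypothesis h_emb : embedding N m h.

Lemma inord_embedding_eq u v :
  u < m -> v < m -> (inord (h u) == inord (h v) :> 'I_N.+1) = (u == v).
Proof.
move=> um vm; apply/eqP/eqP => [/(congr1 val)|-> //].
by rewrite /= !inordK ?ltnS; [exact: h_emb.2 | exact: h_emb.1 ..].
Qed.

Lemma relabelE s : size s = 8 -> relabel N h s = [seq inord (h v) | v <- s] :> seq _.
Proof.
move=> size_s; rewrite -[s in RHS](mkseq_nth 0) size_s /mkseq -val_enum_ord.
by rewrite -!map_comp /= enumT.
Qed.

Lemma relabel_cycle s : rcycle m s -> is_cycle8 (relabel N h s).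
Proof.
case/and3P=> /eqP size_s /allP lt_s uniq_s.
rewrite /is_cycle8 relabelE // map_inj_in_uniq // => u v us vs /eqP.
by rewrite inord_embedding_eq ?lt_s // => /eqP.
Qed.

Lemma relabel_edge_eq s s' (i j : 'I_8) : rcycle m s -> rcycle m s' ->
  (cyc_edge (relabel N h s) i == cyc_edge (relabel N h s') j) =
  same_edge (redge s i) (redge s' j).
Proof.
move=> /and3P[/eqP size_s /allP lt_s _] /and3P[/eqP size_s' /allP lt_s' _].
have nth_lt t k : size t = 8 -> {in t, forall v, v < m} -> k < 8 -> nth 0 t k < m.
  by move=> size_t lt_t lt_k8; apply/lt_t/mem_nth; rewrite size_t.
rewrite /cyc_edge !tnth_mktuple eqEset2 /same_edge /redge !xpair_eqE /=.
by rewrite !inord_embedding_eq ?nth_lt ?ltn_pmod.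
Qed.

Lemma relabel_inside s s' : rinside m s s' -> inside8 (relabel N h s) (relabel N h s').
Proof.
move=> ins; have cyc_s := rinside_rcycle ins.
case/and3P: ins => cyc_s' pss' disj; move: (cyc_s) (cyc_s') => /and3P[/eqP size_s _ _].
case/and3P => /eqP size_s' _ _.
rewrite /inside8 relabel_cycle //=; apply/andP; split.
  apply/eqP/setP => x; rewrite !inE.
  have mem_relabel t : size t = 8 -> (x \in relabel N h t) = (x \in map (inord \o h) t).
    by move=> size_t; rewrite -relabelE.
  by rewrite !mem_relabel // (perm_mem (perm_map _ pss')).
rewrite -setI_eq0; apply/eqP/setP => e; rewrite !inE; apply/negP.
case/andP => /imsetP[i _ ->] /imsetP[j _ /eqP]; rewrite relabel_edge_eq //.
have in_iota8 (k : 'I_8) : val k \in iota 0 8 by rewrite mem_iota ltn_ord.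
by move/allP: disj => /(_ _ (in_iota8 i))/allP/(_ _ (in_iota8 j))/negbTE->.
Qed.

End Relabel.

Definition rcovers_all (T : seq (seq nat)) (m : nat) (need : nat -> nat -> bool) :=
  all (fun x => all (fun y => need x y ==> rcovers T x y) (iota 0 m)) (iota 0 m).

Lemma rcovers_allP T m need x y :
  rcovers_all T m need -> x < m -> y < m -> need x y -> rcovers T x y.
Proof.
move=> /allP/(_ x) cov xm ym; move: cov; rewrite mem_iota leq0n add0n xm.
by move=> /(_ isT)/allP/(_ y); rewrite mem_iota leq0n add0n ym => /(_ isT)/implyP.
Qed.

Definition inside_design m need (T T' : seq (seq nat)) :=
  [&& all2 (rinside m) T T', rcovers_all T m need & rcovers_all T' m need].

Definition leave_pairs : seq (nat * nat) :=
  [:: (0, 5); (5, 10); (0, 10); (1, 6); (6, 11); (1, 11); (2, 7); (7, 12); (2, 12)].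

Definition need15 x y := (x < y) && ((x, y) \notin leave_pairs).
Definition need31 x y := (x < y) && (15 <= y).
Definition need32 x y := x < 16 <= y.

Definition block_vertex j r := 15 + 16 * j + r.

Definition into_block j v := if v < 15 then v else block_vertex j (v - 15).

Definition across_blocks i j v :=
  if v < 16 then block_vertex i v else block_vertex j (v - 16).

Definition block_pairs K : seq (nat * nat) := [seq (i, j) | j <- iota 0 K, i <- iota 0 j].

Lemma size_block_pairs K : size (block_pairs K) = 'C(K, 2).
Proof.
rewrite size_allpairs_dep (eq_map (fun j => size_iota 0 j)) map_id sumnE.
by rewrite -bin2_sum /index_iota subn0.
Qed.

Lemma mem_block_pairs K i j : ((i, j) \in block_pairs K) = (i < j < K).
Proof.
apply/allpairsPdep/andP => [[j' [i' [/[!mem_iota] /= j'K i'j' [-> ->]]]] // | [ij jK]].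
by exists j, i; rewrite !mem_iota.
Qed.

Section Design.
Variable K : nat.
Local Notation N := (16 * K + 14).
Implicit Types T : seq (seq nat).

Lemma id_embedding : embedding N 15 id.
Proof. by split=> [v|u v] /=; lia. Qed.

Lemma into_block_embedding j : j < K -> embedding N 31 (into_block j).
Proof.
rewrite /into_block /block_vertex => jK; split=> [v|u v] lt_v.
  by case: ifP => ?; lia.
by move=> lt_u; case: ifP => ?; case: ifP => ?; lia.
Qed.

Lemma across_blocks_embedding i j : i < j < K -> embedding N 32 (across_blocks i j).
Proof.
rewrite /across_blocks /block_vertex => /andP[ij jK]; split=> [v|u v] lt_v.
  by case: ifP => ?; lia.
by move=> lt_u; case: ifP => ?; case: ifP => ?; lia.
Qed.

Definition design T1 T2 T3 : seq (8.-tuple 'I_N.+1) :=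
  [seq relabel N id s | s <- T1]
  ++ [seq relabel N (into_block j) s | j <- iota 0 K, s <- T2]
  ++ [seq relabel N (across_blocks p.1 p.2) s | p <- block_pairs K, s <- T3].

Lemma size_design T1 T2 T3 :
  size (design T1 T2 T3) = size T1 + K * size T2 + 'C(K, 2) * size T3.
Proof. by rewrite !size_cat size_map !size_allpairs size_iota size_block_pairs addnA. Qed.

Lemma design_cycles T1 T2 T3 :
    all (rcycle 15) T1 -> all (rcycle 31) T2 -> all (rcycle 32) T3 ->
  all (@is_cycle8 N.+1) (design T1 T2 T3).
Proof.
move=> /allP cyc1 /allP cyc2 /allP cyc3; apply/allP => c.
rewrite !mem_cat => /or3P[/mapP[s /cyc1 cyc_s ->] | | ].
- exact: relabel_cycle id_embedding _ cyc_s.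
- case/allpairsP => -[j s] [/= /[!mem_iota] /andP[_ jK] /cyc2 cyc_s ->].
  exact: relabel_cycle (into_block_embedding jK) _ cyc_s.
- case/allpairsP => -[[i j] s] [/= /[!mem_block_pairs] ijK /cyc3 cyc_s ->].
  exact: relabel_cycle (across_blocks_embedding ijK) _ cyc_s.
Qed.

Lemma design_inside T1 T2 T3 T1' T2' T3' :
    all2 (rinside 15) T1 T1' -> all2 (rinside 31) T2 T2' -> all2 (rinside 32) T3 T3' ->
  all2 (@inside8 N.+1) (design T1 T2 T3) (design T1' T2' T3').
Proof.
move=> ins1 ins2 ins3; apply: all2_cat; last apply: all2_cat.
- by apply: all2_map ins1 => s s'; apply/relabel_inside/id_embedding.
- apply: all2_allpairs ins2 => j s s' /[!mem_iota] /andP[_ jK].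
  exact/relabel_inside/into_block_embedding.
- apply: all2_allpairs ins3 => -[i j] s s' /[!mem_block_pairs] ijK.
  exact/relabel_inside/across_blocks_embedding.
Qed.

Definition leave_set : {set {set 'I_N.+1}} :=
  [set e in [seq [set inord p.1; inord p.2] | p <- leave_pairs]].

Lemma design_cover_base T1 T2 T3 (a b : 'I_N.+1) :
    rcovers_all T1 15 need15 -> a < b < 15 -> (val a, val b) \notin leave_pairs ->
  [set a; b] \in edges_of (design T1 T2 T3).
Proof.
move=> cov1 /andP[ab b15] ab_notin.
have need_ab : need15 a b by rewrite /need15 ab.
apply: (relabel_cover (h := id) _ (rcovers_allP cov1 (ltn_trans ab b15) b15 need_ab)) => //.
by move=> c c_in; rewrite mem_cat c_in.
Qed.

Lemma design_cover_block T1 T2 T3 j x y (a b : 'I_N.+1) :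
    rcovers_all T2 31 need31 -> j < K -> x < y < 31 -> 15 <= y ->
    val a = into_block j x -> val b = into_block j y ->
  [set a; b] \in edges_of (design T1 T2 T3).
Proof.
move=> cov2 jK /andP[xy y31] y15.
have need_xy : need31 x y by rewrite /need31 xy.
apply: (relabel_cover _ (rcovers_allP cov2 (ltn_trans xy y31) y31 need_xy)).
move=> c /mapP[s sT ->]; rewrite !mem_cat; apply/orP; right; apply/orP; left.
by apply/allpairsP; exists (j, s); rewrite mem_iota.
Qed.

Lemma design_cover_across T1 T2 T3 i j r r' (a b : 'I_N.+1) :
    rcovers_all T3 32 need32 -> i < j < K -> r < 16 -> r' < 16 ->
    val a = block_vertex i r -> val b = block_vertex j r' ->
  [set a; b] \in edges_of (design T1 T2 T3).
Proof.
move=> cov3 ijK r16 r'16 a_ir b_jr'.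
apply: (relabel_cover (h := across_blocks i j) (T := T3) (x := r) (y := 16 + r')).
- move=> c /mapP[s sT ->]; rewrite !mem_cat; apply/orP; right; apply/orP; right.
  by apply/allpairsP; exists ((i, j), s); rewrite mem_block_pairs.
- by apply: rcovers_allP cov3 _ _ _; rewrite /need32 ?r16 //=; lia.
- by rewrite a_ir /across_blocks r16.
- by rewrite b_jr' /across_blocks ltnNge leq_addr addKn.
Qed.

Lemma block_vertex_decomp v : 15 <= v -> v <= N ->
  exists2 j, j < K & exists2 r, r < 16 & v = block_vertex j r.
Proof.
move=> v15 vN; exists ((v - 15) %/ 16); last exists ((v - 15) %% 16).
- by rewrite ltn_divLR //; lia.
- by rewrite ltn_mod.
- by rewrite /block_vertex {1}(divn_eq (v - 15) 16); lia.
Qed.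

Lemma design_cover T1 T2 T3 :
    rcovers_all T1 15 need15 -> rcovers_all T2 31 need31 -> rcovers_all T3 32 need32 ->
  Kn_edges N.+1 :\: leave_set \subset edges_of (design T1 T2 T3).
Proof.
move=> cov1 cov2 cov3; apply/subsetP => e.
rewrite in_setD => /andP[e_notin]; rewrite inE => /cards2P[a [b [ab e_ab]]]; subst e.
wlog lt_ab : a b ab e_notin / a < b.
  move=> wlog_ab; case: (ltngtP a b) => [| ba | /val_inj eq_ab]; first exact: wlog_ab.
    by rewrite setUC in e_notin *; apply: wlog_ab; rewrite // eq_sym.
  by rewrite eq_ab eqxx in ab.
have into_block_high j r : into_block j (15 + r) = block_vertex j r.
  by rewrite /into_block ltnNge leq_addr addKn.
have [b15 | b15] := ltnP b 15.
  apply: design_cover_base; rewrite ?lt_ab //.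
  apply: contra e_notin => ab_in; rewrite in_set; apply/mapP.
  exists (val a, val b) => //.
  by rewrite !inord_val.
have [jb jbK [rb rb16 b_eq]] := block_vertex_decomp b15 (leq_ord b).
have [a15 | a15] := ltnP a 15.
  apply: (design_cover_block (x := a) (y := 15 + rb) _ _ cov2 jbK); rewrite ?into_block_high //.
  - by apply/andP; split; lia.
  - by rewrite /into_block a15.
have [ja jaK [ra ra16 a_eq]] := block_vertex_decomp a15 (leq_ord a).
have [ja_lt | jb_lt | ja_eq] := ltngtP ja jb.
- by apply: (design_cover_across _ _ cov3 _ ra16 rb16 a_eq b_eq); rewrite ja_lt.
- by move: lt_ab; rewrite a_eq b_eq /block_vertex; lia.
apply: (design_cover_block (x := 15 + ra) (y := 15 + rb) _ _ cov2 jbK); rewrite ?into_block_high //.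
- by move: lt_ab; rewrite a_eq b_eq ja_eq /block_vertex => lt_ab; apply/andP; split; lia.
- by rewrite -ja_eq; exact: a_eq.
Qed.

Lemma bin2_order : 'C(N.+1, 2) = 8 * (12 + K * 45 + 'C(K, 2) * 32) + 9.
Proof.
have := bin2_mul2 K; have := bin2_mul2 N.+1.
by case: (K) => [|k] /=; [done | nia].
Qed.

Lemma design_maximum_almost_2perfect T1 T1' T2 T2' T3 T3' :
    size T1 = 12 -> size T2 = 45 -> size T3 = 32 ->
    inside_design 15 need15 T1 T1' -> inside_design 31 need31 T2 T2' ->
    inside_design 32 need32 T3 T3' ->
  exists cs : seq (8.-tuple 'I_N.+1), maximum_packing8 cs /\ almost_2perfect8 cs.
Proof.
move=> size1 size2 size3 /and3P[ins1 cov1 cov1'] /and3P[ins2 cov2 cov2'].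
case/and3P=> ins3 cov3 cov3'.
have [cyc1 cyc1'] := all2_rinside_rcycle ins1.
have [cyc2 cyc2'] := all2_rinside_rcycle ins2.
have [cyc3 cyc3'] := all2_rinside_rcycle ins3.
have ins := design_inside ins1 ins2 ins3.
have size_cs : 8 * size (design T1 T2 T3) + 9 = 'C(N.+1, 2).
  by rewrite size_design size1 size2 size3 bin2_order.
have size_cs' : size (design T1' T2' T3') = size (design T1 T2 T3).
  by move: ins; rewrite all2E => /andP[/eqP].
have card_L : #|leave_set| <= 9 by rewrite cardsE (leq_trans (card_size _)) ?size_map.
have le_cs : 8 * size (design T1 T2 T3) + #|leave_set| <= 'C(N.+1, 2).
  by rewrite -size_cs leq_add2l.
have [pk leave_cs] :=
  packing8_of_cover (design_cycles cyc1 cyc2 cyc3) (design_cover cov1 cov2 cov3) le_cs.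
have le_cs' : 8 * size (design T1' T2' T3') + #|leave_set| <= 'C(N.+1, 2).
  by rewrite size_cs'.
have [pk' leave_cs'] :=
  packing8_of_cover (design_cycles cyc1' cyc2' cyc3') (design_cover cov1' cov2' cov3') le_cs'.
exists (design T1 T2 T3); split.
  apply: maximum_packing8_of_leave => //.
  - by rewrite /= oddD oddM.
  - by rewrite -size_cs mulnC modnMDl.
  - by rewrite leave_cs (leq_trans (subset_leq_card (subsetIr _ _))).
by exists (design T1' T2' T3'); rewrite leave_cs leave_cs'.
Qed.

End Design.

(* [cycles15] covers K_15 minus the triangles of [leave_pairs], [cycles31]
   covers K_31 minus K_15, and [cycles32] decomposes K_{16,16} with parts
   [0, 16) and [16, 32); the [_in] lists give the corresponding inside cycles. *)
Definition cycles15 : seq (seq nat) :=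
 [:: [:: 14; 4; 12; 11; 0; 9; 5; 8];
  [:: 8; 7; 11; 10; 9; 12; 0; 13];
  [:: 8; 9; 11; 13; 1; 4; 2; 0];
  [:: 0; 7; 1; 8; 12; 3; 14; 6];
  [:: 4; 9; 2; 1; 5; 14; 10; 13];
  [:: 13; 12; 1; 0; 14; 2; 5; 3];
  [:: 13; 14; 1; 3; 6; 9; 7; 5];
  [:: 5; 12; 6; 13; 2; 8; 4; 11];
  [:: 9; 14; 7; 6; 10; 4; 0; 3];
  [:: 3; 2; 6; 5; 4; 7; 10; 8];
  [:: 3; 4; 6; 8; 11; 14; 12; 10];
  [:: 10; 2; 11; 3; 7; 13; 9; 1]].
Definition cycles15_in : seq (seq nat) :=
 [:: [:: 14; 9; 12; 0; 8; 4; 5; 11];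
  [:: 8; 9; 11; 0; 7; 13; 12; 10];
  [:: 8; 1; 9; 0; 4; 13; 2; 11];
  [:: 0; 1; 12; 14; 7; 6; 8; 3];
  [:: 4; 14; 2; 5; 13; 9; 10; 1];
  [:: 13; 14; 1; 5; 12; 3; 2; 0];
  [:: 13; 6; 14; 5; 9; 3; 7; 1];
  [:: 5; 6; 2; 4; 12; 11; 13; 8];
  [:: 9; 4; 7; 10; 3; 14; 0; 6];
  [:: 3; 4; 6; 10; 2; 8; 7; 5];
  [:: 3; 11; 4; 10; 14; 8; 12; 6];
  [:: 10; 11; 7; 9; 2; 1; 3; 13]].
Definition cycles31 : seq (seq nat) :=
 [:: [:: 17; 26; 16; 10; 21; 20; 24; 2];
  [:: 25; 28; 12; 20; 22; 8; 18; 13];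
  [:: 3; 27; 14; 30; 15; 12; 29; 22];
  [:: 18; 27; 17; 11; 22; 21; 25; 3];
  [:: 26; 29; 13; 21; 23; 9; 19; 14];
  [:: 4; 28; 0; 30; 16; 13; 15; 23];
  [:: 19; 28; 18; 12; 23; 22; 26; 4];
  [:: 27; 15; 14; 22; 24; 10; 20; 0];
  [:: 5; 29; 1; 30; 17; 14; 16; 24];
  [:: 20; 29; 19; 13; 24; 23; 27; 5];
  [:: 28; 16; 0; 23; 25; 11; 21; 1];
  [:: 6; 15; 2; 30; 18; 0; 17; 25];
  [:: 21; 15; 20; 14; 25; 24; 28; 6];
  [:: 29; 17; 1; 24; 26; 12; 22; 2];
  [:: 7; 16; 3; 30; 19; 1; 18; 26];
  [:: 22; 16; 21; 0; 26; 25; 29; 7];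
  [:: 15; 18; 2; 25; 27; 13; 23; 3];
  [:: 8; 17; 4; 30; 20; 2; 19; 27];
  [:: 23; 17; 22; 1; 27; 26; 15; 8];
  [:: 16; 19; 3; 26; 28; 14; 24; 4];
  [:: 9; 18; 5; 30; 21; 3; 20; 28];
  [:: 24; 18; 23; 2; 28; 27; 16; 9];
  [:: 17; 20; 4; 27; 29; 0; 25; 5];
  [:: 10; 19; 6; 30; 22; 4; 21; 29];
  [:: 25; 19; 24; 3; 29; 28; 17; 10];
  [:: 18; 21; 5; 28; 15; 1; 26; 6];
  [:: 11; 20; 7; 30; 23; 5; 22; 15];
  [:: 26; 20; 25; 4; 15; 29; 18; 11];
  [:: 19; 22; 6; 29; 16; 2; 27; 7];
  [:: 12; 21; 8; 30; 24; 6; 23; 16];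
  [:: 27; 21; 26; 5; 16; 15; 19; 12];
  [:: 20; 23; 7; 15; 17; 3; 28; 8];
  [:: 13; 22; 9; 30; 25; 7; 24; 17];
  [:: 28; 22; 27; 6; 17; 16; 20; 13];
  [:: 21; 24; 8; 16; 18; 4; 29; 9];
  [:: 14; 23; 10; 30; 26; 8; 25; 18];
  [:: 29; 23; 28; 7; 18; 17; 21; 14];
  [:: 22; 25; 9; 17; 19; 5; 15; 10];
  [:: 0; 24; 11; 30; 27; 9; 26; 19];
  [:: 15; 24; 29; 8; 19; 18; 22; 0];
  [:: 23; 26; 10; 18; 20; 6; 16; 11];
  [:: 1; 25; 12; 30; 28; 10; 27; 20];
  [:: 16; 25; 15; 9; 20; 19; 23; 1];
  [:: 24; 27; 11; 19; 21; 7; 17; 12];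
  [:: 2; 26; 13; 30; 29; 11; 28; 21]].
Definition cycles31_in : seq (seq nat) :=
 [:: [:: 17; 16; 20; 2; 21; 26; 10; 24];
  [:: 25; 8; 28; 22; 13; 20; 18; 12];
  [:: 3; 15; 27; 30; 12; 22; 14; 29];
  [:: 18; 17; 21; 3; 22; 27; 11; 25];
  [:: 26; 9; 29; 23; 14; 21; 19; 13];
  [:: 4; 16; 28; 30; 13; 23; 0; 15];
  [:: 19; 18; 22; 4; 23; 28; 12; 26];
  [:: 27; 10; 15; 24; 0; 22; 20; 14];
  [:: 5; 17; 29; 30; 14; 24; 1; 16];
  [:: 20; 19; 23; 5; 24; 29; 13; 27];
  [:: 28; 11; 16; 25; 1; 23; 21; 0];
  [:: 6; 18; 15; 30; 0; 25; 2; 17];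
  [:: 21; 20; 24; 6; 25; 15; 14; 28];
  [:: 29; 12; 17; 26; 2; 24; 22; 1];
  [:: 7; 19; 16; 30; 1; 26; 3; 18];
  [:: 22; 21; 25; 7; 26; 16; 0; 29];
  [:: 15; 13; 18; 27; 3; 25; 23; 2];
  [:: 8; 20; 17; 30; 2; 27; 4; 19];
  [:: 23; 22; 26; 8; 27; 17; 1; 15];
  [:: 16; 14; 19; 28; 4; 26; 24; 3];
  [:: 9; 21; 18; 30; 3; 28; 5; 20];
  [:: 24; 23; 27; 9; 28; 18; 2; 16];
  [:: 17; 0; 20; 29; 5; 27; 25; 4];
  [:: 10; 22; 19; 30; 4; 29; 6; 21];
  [:: 25; 24; 28; 10; 29; 19; 3; 17];
  [:: 18; 1; 21; 15; 6; 28; 26; 5];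
  [:: 11; 23; 20; 30; 5; 15; 7; 22];
  [:: 26; 25; 29; 11; 15; 20; 4; 18];
  [:: 19; 2; 22; 16; 7; 29; 27; 6];
  [:: 12; 24; 21; 30; 6; 16; 8; 23];
  [:: 27; 26; 15; 12; 16; 21; 5; 19];
  [:: 20; 3; 23; 17; 8; 15; 28; 7];
  [:: 13; 25; 22; 30; 7; 17; 9; 24];
  [:: 28; 27; 16; 13; 17; 22; 6; 20];
  [:: 21; 4; 24; 18; 9; 16; 29; 8];
  [:: 14; 26; 23; 30; 8; 18; 10; 25];
  [:: 29; 28; 17; 14; 18; 23; 7; 21];
  [:: 22; 5; 25; 19; 10; 17; 15; 9];
  [:: 0; 27; 24; 30; 9; 19; 11; 26];
  [:: 15; 29; 18; 0; 19; 24; 8; 22];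
  [:: 23; 6; 26; 20; 11; 18; 16; 10];
  [:: 1; 28; 25; 30; 10; 20; 12; 27];
  [:: 16; 15; 19; 1; 20; 25; 9; 23];
  [:: 24; 7; 27; 21; 12; 19; 17; 11];
  [:: 2; 29; 26; 30; 11; 21; 13; 28]].
Definition cycles32 : seq (seq nat) :=
 [:: [:: 0; 16; 1; 17; 2; 18; 3; 19];
  [:: 0; 18; 1; 19; 2; 16; 3; 17];
  [:: 0; 20; 1; 21; 2; 22; 3; 23];
  [:: 0; 22; 1; 23; 2; 20; 3; 21];
  [:: 0; 24; 1; 25; 2; 26; 3; 27];
  [:: 0; 26; 1; 27; 2; 24; 3; 25];
  [:: 0; 28; 1; 29; 2; 30; 3; 31];
  [:: 0; 30; 1; 31; 2; 28; 3; 29];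
  [:: 4; 16; 5; 17; 6; 18; 7; 19];
  [:: 4; 18; 5; 19; 6; 16; 7; 17];
  [:: 4; 20; 5; 21; 6; 22; 7; 23];
  [:: 4; 22; 5; 23; 6; 20; 7; 21];
  [:: 4; 24; 5; 25; 6; 26; 7; 27];
  [:: 4; 26; 5; 27; 6; 24; 7; 25];
  [:: 4; 28; 5; 29; 6; 30; 7; 31];
  [:: 4; 30; 5; 31; 6; 28; 7; 29];
  [:: 8; 16; 9; 17; 10; 18; 11; 19];
  [:: 8; 18; 9; 19; 10; 16; 11; 17];
  [:: 8; 20; 9; 21; 10; 22; 11; 23];
  [:: 8; 22; 9; 23; 10; 20; 11; 21];
  [:: 8; 24; 9; 25; 10; 26; 11; 27];
  [:: 8; 26; 9; 27; 10; 24; 11; 25];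
  [:: 8; 28; 9; 29; 10; 30; 11; 31];
  [:: 8; 30; 9; 31; 10; 28; 11; 29];
  [:: 12; 16; 13; 17; 14; 18; 15; 19];
  [:: 12; 18; 13; 19; 14; 16; 15; 17];
  [:: 12; 20; 13; 21; 14; 22; 15; 23];
  [:: 12; 22; 13; 23; 14; 20; 15; 21];
  [:: 12; 24; 13; 25; 14; 26; 15; 27];
  [:: 12; 26; 13; 27; 14; 24; 15; 25];
  [:: 12; 28; 13; 29; 14; 30; 15; 31];
  [:: 12; 30; 13; 31; 14; 28; 15; 29]].
Definition cycles32_in : seq (seq nat) :=
 [:: [:: 0; 18; 1; 19; 2; 16; 3; 17];
  [:: 0; 16; 1; 17; 2; 18; 3; 19];
  [:: 0; 22; 1; 23; 2; 20; 3; 21];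
  [:: 0; 20; 1; 21; 2; 22; 3; 23];
  [:: 0; 26; 1; 27; 2; 24; 3; 25];
  [:: 0; 24; 1; 25; 2; 26; 3; 27];
  [:: 0; 30; 1; 31; 2; 28; 3; 29];
  [:: 0; 28; 1; 29; 2; 30; 3; 31];
  [:: 4; 18; 5; 19; 6; 16; 7; 17];
  [:: 4; 16; 5; 17; 6; 18; 7; 19];
  [:: 4; 22; 5; 23; 6; 20; 7; 21];
  [:: 4; 20; 5; 21; 6; 22; 7; 23];
  [:: 4; 26; 5; 27; 6; 24; 7; 25];
  [:: 4; 24; 5; 25; 6; 26; 7; 27];
  [:: 4; 30; 5; 31; 6; 28; 7; 29];
  [:: 4; 28; 5; 29; 6; 30; 7; 31];
  [:: 8; 18; 9; 19; 10; 16; 11; 17];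
  [:: 8; 16; 9; 17; 10; 18; 11; 19];
  [:: 8; 22; 9; 23; 10; 20; 11; 21];
  [:: 8; 20; 9; 21; 10; 22; 11; 23];
  [:: 8; 26; 9; 27; 10; 24; 11; 25];
  [:: 8; 24; 9; 25; 10; 26; 11; 27];
  [:: 8; 30; 9; 31; 10; 28; 11; 29];
  [:: 8; 28; 9; 29; 10; 30; 11; 31];
  [:: 12; 18; 13; 19; 14; 16; 15; 17];
  [:: 12; 16; 13; 17; 14; 18; 15; 19];
  [:: 12; 22; 13; 23; 14; 20; 15; 21];
  [:: 12; 20; 13; 21; 14; 22; 15; 23];
  [:: 12; 26; 13; 27; 14; 24; 15; 25];
  [:: 12; 24; 13; 25; 14; 26; 15; 27];
  [:: 12; 30; 13; 31; 14; 28; 15; 29];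
  [:: 12; 28; 13; 29; 14; 30; 15; 31]].

Theorem lemma3p8 (n : nat) :
  15 <= n -> n %% 16 = 15 ->
  exists cs : seq (8.-tuple 'I_n), maximum_packing8 cs /\ almost_2perfect8 cs.
Proof.
move=> _ n_mod16; have -> : n = (16 * (n %/ 16) + 14).+1.
  by rewrite {1}(divn_eq n 16) n_mod16 mulnC addnS.
by apply: (@design_maximum_almost_2perfect _ cycles15 cycles15_in cycles31 cycles31_in
  cycles32 cycles32_in); vm_compute.
Qed.
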